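(* Consider the heterogeneous agents $$\dot x_i=\sum_{j=1}^N\alpha_{ij}(t)(y_j-y_i),\qquad y_i=\mathrm{sat}_i(x_i),\qquad i\in\mathcal V=\{1,\dots,N\},$$ with pairwise distinct saturation levels $s_i>0$, where the time-varying undirected graph satisfies the standing assumptions, is integrally connected over $[0,\infty)$, and satisfies $\alpha_{ij}(t)\in\{0\}\cup[\alpha_{\min},\alpha_{\max}]$ with constants $0<\alpha_{\min}\le\alpha_{\max}$. Assume not all $x_i(t_0)$ are equal. Then the agents achieve consensus if and only if $$\frac1N\Big|\sum_{i=1}^N x_i(t_0)\Big|\le\min_{i\in\mathcal V}s_i.$$
   Context: $\mathrm{sat}_i(x)=\mathrm{sign}(x)\min\{|x|,s_i\}$. Standing assumptions: $\alpha_{ij}(t)=\alpha_{ji}(t)\ge0$, each $\alpha_{ij}$ continuous on $[0,\infty)$ except on a set of measure zero; Carathéodory solutions. Integral graph: $\bar\alpha_{ij}=1$ if $\int_0^\infty\alpha_{ij}(t)dt=\infty$, else $0$; integrally connected means the integral graph is connected. Consensus: there is $C$ with $\lim_{t\to\infty}x_i(t)=C$ for all $i$. *)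

From Stdlib Require Import Reals Lra.
Open Scope R_scope.

Fixpoint rsum (f : nat -> R) (n : nat) : R :=
  match n with
  | O => 0
  | S m => rsum f m + f m
  end.

Definition Rsign (x : R) : R :=
  match Rlt_dec 0 x with
  | left _ => 1
  | right _ => match Rlt_dec x 0 with left _ => -1 | right _ => 0 end
  end.

Definition sat (s x : R) : R := Rsign x * Rmin (Rabs x) s.

Definition measure_zero (D : R -> Prop) : Prop :=
  forall eps, 0 < eps ->
    exists a b : nat -> R,
      (forall n, a n <= b n) /\
      (forall t, D t -> exists n, a n < t < b n) /\
      (forall m, rsum (fun n => b n - a n) m <= eps).

Definition cont_ae_nonneg (f : R -> R) : Prop :=
  exists D, measure_zero D /\ forall t, 0 <= t -> ~ D t -> continuity_pt f t.

Definition integral_diverges (f : R -> R) : Prop :=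
  forall M, exists T (pr : Riemann_integrable f 0 T), 0 <= T /\ M < RiemannInt pr.

Inductive reach (N : nat) (E : nat -> nat -> Prop) : nat -> nat -> Prop :=
  | reach_refl : forall i, (i < N)%nat -> reach N E i i
  | reach_step : forall i j k, reach N E i j -> (k < N)%nat -> E j k -> reach N E i k.

Definition graph_connected (N : nat) (E : nat -> nat -> Prop) : Prop :=
  forall i j, (i < N)%nat -> (j < N)%nat -> reach N E i j.

Definition integrally_connected (N : nat) (alpha : nat -> nat -> R -> R) : Prop :=
  graph_connected N (fun i j => integral_diverges (alpha i j)).

Definition rhs (N : nat) (s : nat -> R) (alpha : nat -> nat -> R -> R)
  (x : nat -> R -> R) (i : nat) (t : R) : R :=
  rsum (fun j => alpha i j t * (sat (s j) (x j t) - sat (s i) (x i t))) N.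

(* Caratheodory solution on [t0, oo), in integral form *)
Definition is_solution (N : nat) (s : nat -> R) (alpha : nat -> nat -> R -> R)
  (t0 : R) (x : nat -> R -> R) : Prop :=
  forall i, (i < N)%nat -> forall t, t0 <= t ->
    exists pr : Riemann_integrable (rhs N s alpha x i) t0 t,
      x i t = x i t0 + RiemannInt pr.

Definition tends_at_infty (f : R -> R) (C : R) : Prop :=
  forall eps, 0 < eps -> exists T, forall t, T <= t -> Rabs (f t - C) < eps.

Definition consensus (N : nat) (x : nat -> R -> R) : Prop :=
  exists C, forall i, (i < N)%nat -> tends_at_infty (x i) C.

From Stdlib Require Import Reals Lra Lia Classical ClassicalEpsilon.
From Coquelicot Require Import Coquelicot.
Open Scope R_scope.

(* The coupling is symmetric, so the sum of the states is conserved.  For a level [th] with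
   [|th| <= s_i] for all [i], saturation preserves the position of every agent relative to [th],
   so the excess [sum_i max 0 (x_i - th)] is nonincreasing and converges.  Comparing the limits at
   finitely many nearby levels shows that eventually some band of states is empty; no agent can
   cross it, and agents cannot remain on both sides of it, since along an edge of the integral graph
   the flow across the band has divergent integral and would drive the sum over the upper side to
   [-oo].  Hence if the average [c] satisfies [|c| <= min s_i], all agents eventually lie above any
   level below [c] (and, by the symmetry [x -> -x], below any level above [c]), so they converge
   to [c].  Conversely a common limit [C > s_p], [s_p] the smallest (unique) level, would leave
   agent [p] saturated below all other outputs, and the same drainage argument applies to the set
   of the other agents. *)

(** * Finite sums *)

Lemma rsum_ext f g n : (forall i, (i < n)%nat -> f i = g i) -> rsum f n = rsum g n.
Proof.
  induction n as [|n IH]; intros H; simpl; auto.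
  rewrite IH, H; [reflexivity | lia | intros; apply H; lia].
Qed.

Lemma rsum_plus f g n : rsum (fun i => f i + g i) n = rsum f n + rsum g n.
Proof. induction n as [|n IH]; simpl; [ring | rewrite IH; ring]. Qed.

Lemma rsum_minus f g n : rsum (fun i => f i - g i) n = rsum f n - rsum g n.
Proof. induction n as [|n IH]; simpl; [ring | rewrite IH; ring]. Qed.

Lemma rsum_scal f c n : rsum (fun i => c * f i) n = c * rsum f n.
Proof. induction n as [|n IH]; simpl; [ring | rewrite IH; ring]. Qed.

Lemma rsum_opp f n : rsum (fun i => - f i) n = - rsum f n.
Proof. induction n as [|n IH]; simpl; [ring | rewrite IH; ring]. Qed.

Lemma rsum_const c n : rsum (fun _ => c) n = INR n * c.
Proof. induction n as [|n IH]; [simpl; ring |]. cbn [rsum]. rewrite IH, S_INR. ring. Qed.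

Lemma rsum_le f g n : (forall i, (i < n)%nat -> f i <= g i) -> rsum f n <= rsum g n.
Proof.
  induction n as [|n IH]; intros H; simpl; [lra |].
  assert (f n <= g n) by (apply H; lia).
  assert (rsum f n <= rsum g n) by (apply IH; intros; apply H; lia).
  lra.
Qed.

Lemma rsum_lt f g n : (0 < n)%nat -> (forall i, (i < n)%nat -> f i < g i) -> rsum f n < rsum g n.
Proof.
  destruct n as [|n]; [lia |]. intros _ H. simpl.
  assert (rsum f n <= rsum g n) by (apply rsum_le; intros; apply Rlt_le, H; lia).
  assert (f n < g n) by (apply H; lia).
  lra.
Qed.

Lemma rsum_nonneg f n : (forall i, (i < n)%nat -> 0 <= f i) -> 0 <= rsum f n.
Proof.
  intros H. rewrite <- (Rmult_0_r (INR n)), <- rsum_const. now apply rsum_le.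
Qed.

Lemma rsum_ge_term f n p : (forall i, (i < n)%nat -> 0 <= f i) -> (p < n)%nat -> f p <= rsum f n.
Proof.
  induction n as [|n IH]; intros H Hp; simpl; [lia |].
  destruct (Nat.eq_dec p n) as [-> | Hpn].
  - assert (0 <= rsum f n) by (apply rsum_nonneg; intros; apply H; lia). lra.
  - assert (f p <= rsum f n) by (apply IH; [intros; apply H | ]; lia).
    assert (0 <= f n) by (apply H; lia). lra.
Qed.

Lemma rsum_le_term f n p : (forall i, (i < n)%nat -> f i <= 0) -> (p < n)%nat -> rsum f n <= f p.
Proof.
  induction n as [|n IH]; intros H Hp; simpl; [lia |].
  destruct (Nat.eq_dec p n) as [-> | Hpn].
  - assert (rsum f n <= 0).
    { rewrite <- (Rmult_0_r (INR n)), <- rsum_const. apply rsum_le; intros; apply H; lia. }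
    lra.
  - assert (rsum f n <= f p) by (apply IH; [intros; apply H | ]; lia).
    assert (f n <= 0) by (apply H; lia). lra.
Qed.

Lemma rsum_abs f n : Rabs (rsum f n) <= rsum (fun i => Rabs (f i)) n.
Proof.
  induction n as [|n IH]; simpl; [rewrite Rabs_R0; lra |].
  eapply Rle_trans; [apply Rabs_triang | lra].
Qed.

Lemma rsum_swap (F : nat -> nat -> R) n m :
  rsum (fun i => rsum (fun j => F i j) m) n = rsum (fun j => rsum (fun i => F i j) n) m.
Proof.
  induction n as [|n IH]; simpl.
  - rewrite rsum_const. simpl. ring.
  - rewrite IH, <- rsum_plus. reflexivity.
Qed.

Lemma rsum_antisymmetrize (A : nat -> nat -> R) (g Y : nat -> R) n :
  (forall i j, (i < n)%nat -> (j < n)%nat -> A i j = A j i) ->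
  2 * rsum (fun i => g i * rsum (fun j => A i j * (Y j - Y i)) n) n =
  rsum (fun i => rsum (fun j => A i j * ((g i - g j) * (Y j - Y i))) n) n.
Proof.
  intros Hsym.
  set (L := rsum (fun i => rsum (fun j => g i * (A i j * (Y j - Y i))) n) n).
  assert (HL : rsum (fun i => g i * rsum (fun j => A i j * (Y j - Y i)) n) n = L).
  { apply rsum_ext. intros. now rewrite <- rsum_scal. }
  assert (Hswap : L = rsum (fun i => rsum (fun j => g j * (A i j * (Y i - Y j))) n) n).
  { unfold L. rewrite rsum_swap. apply rsum_ext. intros i Hi. apply rsum_ext. intros j Hj.
    now rewrite (Hsym j i). }
  rewrite HL.
  transitivity (L + L); [ring |]. rewrite Hswap at 2. unfold L.
  rewrite <- rsum_plus. apply rsum_ext. intros i _. rewrite <- rsum_plus.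
  apply rsum_ext. intros j _. ring.
Qed.

Definition indicator (U : nat -> bool) (i : nat) : R := if U i then 1 else 0.

Lemma rsum_indicator_neq f n p : (p < n)%nat ->
  rsum (fun i => indicator (fun i => negb (Nat.eqb i p)) i * f i) n = rsum f n - f p.
Proof.
  induction n as [|n IH]; intros Hp; [lia |]. simpl. unfold indicator at 2.
  destruct (Nat.eq_dec p n) as [-> | Hpn].
  - rewrite Nat.eqb_refl. simpl.
    rewrite (rsum_ext _ f); [ring |].
    intros i Hi. unfold indicator. replace (Nat.eqb i n) with false by (symmetry; apply Nat.eqb_neq; lia).
    simpl. ring.
  - replace (Nat.eqb n p) with false by (symmetry; apply Nat.eqb_neq; lia). simpl.
    rewrite IH by lia. ring.
Qed.

Lemma rsum_zero_upper f n e i : 0 < e -> rsum f n = 0 ->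
  (forall j, (j < n)%nat -> - e < f j) -> (i < n)%nat -> f i < INR n * e.
Proof.
  intros He Hsum Hlow Hi.
  assert (f i + e <= rsum (fun j => f j + e) n).
  { apply (rsum_ge_term (fun j => f j + e)); auto. intros j Hj. specialize (Hlow j Hj). lra. }
  rewrite rsum_plus, rsum_const, Hsum in H. lra.
Qed.

Lemma exists_argmin (f : nat -> R) n : (0 < n)%nat ->
  exists p, (p < n)%nat /\ forall i, (i < n)%nat -> f p <= f i.
Proof.
  induction n as [|n IH]; intros Hn; [lia |].
  destruct (Nat.eq_dec n 0) as [-> | Hn0].
  - exists 0%nat. split; [lia |]. intros i Hi. replace i with 0%nat by lia. lra.
  - destruct IH as [p [Hp Hmin]]; [lia |].
    destruct (Rle_dec (f p) (f n)).
    + exists p. split; [lia |]. intros i Hi. destruct (Nat.eq_dec i n) as [-> |]; auto. apply Hmin; lia.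
    + exists n. split; [lia |]. intros i Hi. destruct (Nat.eq_dec i n) as [-> |]; [lra |].
      specialize (Hmin i ltac:(lia)). lra.
Qed.

(** * Integrals *)

Lemma ex_RInt_Rplus f g a b : ex_RInt f a b -> ex_RInt g a b -> ex_RInt (fun t => f t + g t) a b.
Proof. intros. now apply (ex_RInt_plus f g). Qed.

Lemma ex_RInt_Rmult_l f a b c : ex_RInt f a b -> ex_RInt (fun t => c * f t) a b.
Proof. intros. now apply (ex_RInt_scal f). Qed.

Lemma ex_RInt_Rconst a b (c : R) : ex_RInt (fun _ => c) a b.
Proof. apply (@ex_RInt_const R_NormedModule). Qed.

Lemma RInt_Rplus f g a b :
  ex_RInt f a b -> ex_RInt g a b -> RInt (fun t => f t + g t) a b = RInt f a b + RInt g a b.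
Proof. intros. now apply (RInt_plus f g). Qed.

Lemma RInt_Rmult_l f a b c : ex_RInt f a b -> RInt (fun t => c * f t) a b = c * RInt f a b.
Proof. intros. now apply (RInt_scal f). Qed.

Lemma RInt_Rconst a b c : RInt (fun _ => c) a b = (b - a) * c.
Proof. apply (RInt_const a b c). Qed.

Lemma RInt_Chasles_R f a b c :
  ex_RInt f a b -> ex_RInt f b c -> RInt f a b + RInt f b c = RInt f a c.
Proof. intros. now apply (RInt_Chasles f). Qed.

Lemma ex_RInt_subinterval (f : R -> R) a b c d :
  a <= c -> c <= d -> d <= b -> ex_RInt f a b -> ex_RInt f c d.
Proof.
  intros. apply (@ex_RInt_Chasles_1 R_CompleteNormedModule _ c d b); [lra |].
  apply (@ex_RInt_Chasles_2 R_CompleteNormedModule _ a c b); [lra | assumption].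
Qed.

Lemma RInt_rsum (F : nat -> R -> R) n a b : (forall i, (i < n)%nat -> ex_RInt (F i) a b) ->
  ex_RInt (fun t => rsum (fun i => F i t) n) a b /\
  RInt (fun t => rsum (fun i => F i t) n) a b = rsum (fun i => RInt (F i) a b) n.
Proof.
  induction n as [|n IH]; intros H; simpl.
  - split; [apply ex_RInt_Rconst | rewrite RInt_Rconst; ring].
  - destruct IH as [E1 E2]; [intros; apply H; lia |].
    assert (En : ex_RInt (F n) a b) by (apply H; lia).
    split; [now apply ex_RInt_Rplus |].
    now rewrite RInt_Rplus, E2.
Qed.

Lemma RInt_le_const f a b K :
  a <= b -> ex_RInt f a b -> (forall t, a <= t <= b -> f t <= K) -> RInt f a b <= (b - a) * K.
Proof.
  intros. rewrite <- RInt_Rconst. apply RInt_le; auto; [apply ex_RInt_Rconst |].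
  intros; apply H1; lra.
Qed.

Lemma integral_diverges_tail (f : R -> R) amax T : 0 <= T ->
  (forall t, 0 <= t -> f t <= amax) -> integral_diverges f ->
  forall M, exists T', T < T' /\ ex_RInt f T T' /\ M < RInt f T T'.
Proof.
  intros HT Hbnd Hdiv M.
  destruct (Hdiv (Rabs M + Rabs amax * T)) as [T' [pr [HT'0 HT']]].
  rewrite <- RInt_Reals in HT'. apply ex_RInt_Reals_1 in pr.
  assert (Hhead : forall a, 0 <= a <= T' -> RInt f 0 a <= Rabs amax * a).
  { intros a Ha. replace (Rabs amax * a) with ((a - 0) * Rabs amax) by ring.
    apply RInt_le_const; [lra | apply (ex_RInt_subinterval _ 0 T'); lra || assumption |].
    intros t Ht. pose proof (Rle_abs amax). specialize (Hbnd t ltac:(lra)). lra. }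
  assert (HTT' : T < T').
  { apply Rnot_le_lt. intros Hle. specialize (Hhead T' ltac:(lra)).
    pose proof (Rabs_pos amax). pose proof (Rabs_pos M). nra. }
  assert (Hex : ex_RInt f T T') by (apply (ex_RInt_subinterval _ 0 T'); lra || assumption).
  exists T'. repeat split; auto.
  rewrite <- (RInt_Chasles_R f 0 T T') in HT'
    by (auto; apply (ex_RInt_subinterval _ 0 T'); lra || assumption).
  specialize (Hhead T ltac:(lra)). pose proof (Rle_abs M). lra.
Qed.

(** * Saturation *)

Lemma sat_clamp s z : 0 < s -> sat s z = Rmax (- s) (Rmin z s).
Proof.
  intros Hs. unfold sat, Rsign, Rmin, Rmax.
  destruct (Rlt_dec 0 z); [| destruct (Rlt_dec z 0)];
  destruct (Rle_dec (Rabs z) s); destruct (Rle_dec z s); destruct (Rle_dec (- s) _);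
  try rewrite Rabs_right in * by lra; try rewrite Rabs_left in * by lra; try lra.
  all: try (destruct (Rle_dec (- s) z); lra).
  all: assert (z = 0) by lra; subst; rewrite Rabs_R0 in *; lra.
Qed.

Ltac destruct_Rle :=
  repeat match goal with |- context [Rle_dec ?a ?b] =>
    lazymatch a with context [Rle_dec _ _] => fail | _ =>
    lazymatch b with context [Rle_dec _ _] => fail | _ => destruct (Rle_dec a b) end end end.

Ltac destruct_Rabs :=
  unfold Rabs; repeat match goal with |- context [Rcase_abs ?a] => destruct (Rcase_abs a) end.

Lemma sat_le_compat s z w : 0 < s -> z <= w -> sat s z <= sat s w.
Proof. intros Hs H. rewrite !sat_clamp by auto. unfold Rmax, Rmin. destruct_Rle; lra. Qed.

Lemma sat_lipschitz s z w : 0 < s -> Rabs (sat s z - sat s w) <= Rabs (z - w).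
Proof.
  intros Hs. rewrite !sat_clamp by auto. unfold Rmax, Rmin. destruct_Rle; destruct_Rabs; lra.
Qed.

Lemma sat_bound s z : 0 < s -> Rabs (sat s z) <= s.
Proof. intros Hs. rewrite sat_clamp by auto. unfold Rmax, Rmin. destruct_Rle; destruct_Rabs; lra. Qed.

Lemma sat_id s z : 0 < s -> - s <= z <= s -> sat s z = z.
Proof. intros Hs H. rewrite sat_clamp by auto. unfold Rmax, Rmin. destruct_Rle; lra. Qed.

Lemma sat_opp s z : 0 < s -> sat s (- z) = - sat s z.
Proof. intros Hs. rewrite !sat_clamp by auto. unfold Rmax, Rmin. destruct_Rle; lra. Qed.

Lemma sat_ge s th z : 0 < s -> - s <= th <= s -> th <= z -> th <= sat s z.
Proof. intros. rewrite <- (sat_id s th) at 1 by auto. now apply sat_le_compat. Qed.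

Lemma sat_le s th z : 0 < s -> - s <= th <= s -> z <= th -> sat s z <= th.
Proof. intros. rewrite <- (sat_id s th) by auto. now apply sat_le_compat. Qed.

(** * Behaviour at infinity *)

Definition near_infty (P : R -> Prop) : Prop := exists T, forall t, T <= t -> P t.

Lemma near_infty_and (P Q : R -> Prop) :
  near_infty P -> near_infty Q -> near_infty (fun t => P t /\ Q t).
Proof.
  intros [T1 H1] [T2 H2]. exists (Rmax T1 T2). intros t Ht.
  split; [apply H1 | apply H2]; eapply Rle_trans; eauto; [apply Rmax_l | apply Rmax_r].
Qed.

Lemma near_infty_ge (P : R -> Prop) t0 : near_infty P -> near_infty (fun t => t0 <= t /\ P t).
Proof. intros HP. apply near_infty_and; [exists t0 | ]; auto. Qed.

Lemma near_infty_forall_lt (P : nat -> R -> Prop) n :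
  (forall i, (i < n)%nat -> near_infty (P i)) -> near_infty (fun t => forall i, (i < n)%nat -> P i t).
Proof.
  induction n as [|n IH]; intros H; [exists 0; intros; lia |].
  destruct (near_infty_and _ _ (IH (fun i Hi => H i ltac:(lia))) (H n ltac:(lia))) as [T HT].
  exists T. intros t Ht i Hi. destruct (HT t Ht) as [Hlt Hn].
  destruct (Nat.eq_dec i n) as [-> | ]; [assumption | apply Hlt; lia].
Qed.

Lemma tends_at_infty_near (f : R -> R) a eps :
  tends_at_infty f a -> 0 < eps -> near_infty (fun t => a - eps < f t < a + eps).
Proof.
  intros Hf Heps. destruct (Hf eps Heps) as [T HT]. exists T. intros t Ht.
  apply Rabs_lt_between' , HT, Ht.
Qed.

Lemma tends_at_infty_opp f a : tends_at_infty f a -> tends_at_infty (fun t => - f t) (- a).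
Proof.
  intros Hf eps Heps. destruct (Hf eps Heps) as [T HT]. exists T. intros t Ht.
  replace (- f t - - a) with (- (f t - a)) by ring. rewrite Rabs_Ropp. auto.
Qed.

Lemma tends_at_infty_le (f g : R -> R) a b c :
  tends_at_infty f a -> tends_at_infty g b -> near_infty (fun t => f t <= g t + c) -> a <= b + c.
Proof.
  intros Hf Hg Hfg. apply Rnot_lt_le. intros Hlt.
  set (eps := (a - (b + c)) / 2).
  destruct (near_infty_and _ _ Hfg (near_infty_and _ _ (tends_at_infty_near f a eps Hf ltac:(unfold eps; lra))
              (tends_at_infty_near g b eps Hg ltac:(unfold eps; lra)))) as [T HT].
  destruct (HT T (Rle_refl T)) as [H1 [H2 H3]]. unfold eps in *. lra.
Qed.

Lemma tends_at_infty_second_difference (f g h : R -> R) a b c :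
  tends_at_infty f a -> tends_at_infty g b -> tends_at_infty h c ->
  tends_at_infty (fun t => f t - 2 * g t + h t) (a - 2 * b + c).
Proof.
  intros Hf Hg Hh eps Heps.
  destruct (near_infty_and _ _ (tends_at_infty_near f a (eps / 4) Hf ltac:(lra))
              (near_infty_and _ _ (tends_at_infty_near g b (eps / 4) Hg ltac:(lra))
                 (tends_at_infty_near h c (eps / 4) Hh ltac:(lra)))) as [T HT].
  exists T. intros t Ht. destruct (HT t Ht) as [H1 [H2 H3]]. apply Rabs_lt_between'. lra.
Qed.

Lemma tends_of_nonincreasing (f : R -> R) t0 m :
  (forall t1 t2, t0 <= t1 <= t2 -> f t2 <= f t1) -> (forall t, t0 <= t -> m <= f t) ->
  exists h, tends_at_infty f h.
Proof.
  intros Hdec Hm.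
  set (E := fun r => exists t, t0 <= t /\ r = - f t).
  assert (Hb : bound E) by (exists (- m); intros r [t [Ht ->]]; specialize (Hm t Ht); lra).
  assert (Hne : exists r, E r) by (exists (- f t0); exists t0; split; [lra | reflexivity]).
  destruct (completeness E Hb Hne) as [l [Hub Hlub]].
  exists (- l). intros eps Heps.
  assert (HT : exists T, t0 <= T /\ l - eps < - f T).
  { apply NNPP. intros Hno. assert (l <= l - eps); [| lra].
    apply Hlub. intros r [t [Ht ->]]. apply Rnot_lt_le. intros Hlt. apply Hno. eauto. }
  destruct HT as [T [HT0 HT]]. exists T. intros t Ht.
  assert (- f t <= l) by (apply Hub; exists t; split; [lra | reflexivity]).
  specialize (Hdec T t ltac:(lra)). apply Rabs_lt_between'. lra.
Qed.

(* Splitting [[t1, t2]] into [n] steps bounds the increase by [C (t2 - t1)^2 / n]. *)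
Lemma nonincreasing_of_quadratic_step (f : R -> R) t0 C : 0 <= C ->
  (forall t h, t0 <= t -> 0 <= h -> f (t + h) <= f t + C * h * h) ->
  forall t1 t2, t0 <= t1 <= t2 -> f t2 <= f t1.
Proof.
  intros HC Hf t1 t2 Ht.
  assert (Hn : forall n : nat, (0 < n)%nat -> f t2 <= f t1 + C * (t2 - t1) * (t2 - t1) / INR n).
  { intros n Hn. set (d := (t2 - t1) / INR n).
    assert (Hpos : 0 < INR n) by (apply lt_0_INR; lia).
    assert (Hd : 0 <= d) by (apply Rdiv_le_0_compat; lra).
    assert (Hk : forall k : nat, f (t1 + INR k * d) <= f t1 + INR k * (C * d * d)).
    { induction k as [|k IH]; [simpl; rewrite Rmult_0_l, !Rplus_0_r; lra |].
      rewrite S_INR. replace (t1 + (INR k + 1) * d) with ((t1 + INR k * d) + d) by ring.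
      pose proof (pos_INR k).
      eapply Rle_trans; [apply Hf; nra | nra]. }
    specialize (Hk n). replace (t1 + INR n * d) with t2 in Hk by (unfold d; field; lra).
    replace (C * (t2 - t1) * (t2 - t1) / INR n) with (INR n * (C * d * d)) by (unfold d; field; lra).
    exact Hk. }
  apply Rnot_lt_le. intros Hlt.
  destruct (INR_unbounded (C * (t2 - t1) * (t2 - t1) / (f t2 - f t1))) as [n Hbig].
  assert (Hq : 0 <= C * (t2 - t1) * (t2 - t1) / (f t2 - f t1))
    by (apply Rdiv_le_0_compat; [apply Rmult_le_pos; nra | lra]).
  assert (Hn0 : (0 < n)%nat) by (destruct n; [simpl in Hbig; lra | lia]).
  assert (Hpos : 0 < INR n) by (apply lt_0_INR; lia).
  specialize (Hn n Hn0).
  assert (C * (t2 - t1) * (t2 - t1) / INR n < f t2 - f t1); [| lra].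
  apply Rlt_div_l; [lra |]. apply Rlt_div_l in Hbig; lra.
Qed.

Lemma continuity_pt_of_lipschitz (f : R -> R) a t0 K : t0 < a -> 0 <= K ->
  (forall u v, t0 <= u <= v -> Rabs (f v - f u) <= K * (v - u)) -> continuity_pt f a.
Proof.
  intros Ha HK Hl eps Heps. exists (Rmin (a - t0) (eps / (K + 1))).
  split; [apply Rmin_pos; [lra | apply Rdiv_lt_0_compat; lra] |].
  intros z [_ Hz]. simpl in *. unfold R_dist in *.
  assert (Hz1 : Rabs (z - a) < a - t0) by (eapply Rlt_le_trans; [apply Hz | apply Rmin_l]).
  assert (Hz2 : Rabs (z - a) < eps / (K + 1)) by (eapply Rlt_le_trans; [apply Hz | apply Rmin_r]).
  assert (Hk : K * Rabs (z - a) < eps).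
  { apply Rlt_div_r in Hz2; [| lra]. pose proof (Rabs_pos (z - a)). nra. }
  destruct (Rle_dec a z).
  - rewrite Rabs_right in Hz1, Hk by lra. pose proof (Hl a z ltac:(lra)). lra.
  - rewrite Rabs_left in Hz1, Hk by lra. pose proof (Hl z a ltac:(lra)).
    rewrite Rabs_minus_sym. lra.
Qed.

Lemma second_difference_small (h : nat -> R) n dl : 0 < dl ->
  h 0%nat - h 1%nat <= INR n * dl -> h (2 * n + 2)%nat <= h (2 * n + 1)%nat ->
  exists k, (k + 2 <= 2 * n + 2)%nat /\ h k - 2 * h (S k) + h (S (S k)) < dl / 2.
Proof.
  intros Hdl H0 HM. apply NNPP. intros Hno.
  assert (Hall : forall k, (k < 2 * n + 1)%nat ->
            dl / 2 <= (h k - h (S k)) - (h (S k) - h (S (S k)))).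
  { intros k Hk. apply Rnot_lt_le. intros Hlt. apply Hno. exists k. split; [lia | lra]. }
  assert (Htel : forall m, (m <= 2 * n + 1)%nat ->
            INR m * (dl / 2) <= (h 0%nat - h 1%nat) - (h m - h (S m))).
  { induction m as [|m IH]; intros Hm; [simpl; lra |].
    specialize (IH ltac:(lia)). specialize (Hall m ltac:(lia)). rewrite S_INR. lra. }
  specialize (Htel (2 * n + 1)%nat (le_n _)).
  replace (S (2 * n + 1)) with (2 * n + 2)%nat in Htel by lia.
  rewrite plus_INR, mult_INR in Htel.
  replace (INR 2) with 2 in Htel by (simpl; ring). replace (INR 1) with 1 in Htel by reflexivity.
  nra.
Qed.

Lemma no_crossing_above (g : R -> R) T t a d : T <= t -> a <= d ->
  (forall z, T <= z <= t -> continuity_pt g z) -> (forall z, T <= z <= t -> ~ (a <= g z <= d)) ->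
  d < g T -> d < g t.
Proof.
  intros Ht Had Hcont Hout HT. apply Rnot_le_lt. intros Hle.
  assert (Hlt : g t < a) by (apply Rnot_le_lt; intro; apply (Hout t); lra).
  destruct (Ranalysis5.IVT_interv (fun z => (a + d) / 2 - g z) T t) as [z [Hz Hgz]].
  - intros z Hz. apply continuity_pt_minus; [apply continuity_pt_const; intros ? ? ; reflexivity |].
    now apply Hcont.
  - destruct (Req_dec T t) as [-> | ]; [lra | lra].
  - lra.
  - lra.
  - apply (Hout z Hz). lra.
Qed.

Lemma no_crossing_below (g : R -> R) T t a d : T <= t -> a <= d ->
  (forall z, T <= z <= t -> continuity_pt g z) -> (forall z, T <= z <= t -> ~ (a <= g z <= d)) ->
  g T < a -> g t < a.
Proof.
  intros Ht Had Hcont Hout HT.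
  enough (- a < - g t) by lra.
  apply (no_crossing_above (fun z => - g z) T t (- d) (- a)); [lra | lra | | | lra].
  - intros z Hz. now apply continuity_pt_opp, Hcont.
  - intros z Hz Hin. apply (Hout z Hz). lra.
Qed.

(** * Excess over a level *)

Definition excess (n : nat) (z : nat -> R) (th : R) : R := rsum (fun i => Rmax 0 (z i - th)) n.

Lemma excess_nonneg n z th : 0 <= excess n z th.
Proof. apply rsum_nonneg. intros. apply Rmax_l. Qed.

Lemma excess_antitone n z th th' : th <= th' -> excess n z th' <= excess n z th.
Proof. intros. apply rsum_le. intros. unfold Rmax. destruct_Rle; lra. Qed.

Lemma excess_lipschitz n z th th' : th <= th' -> excess n z th - excess n z th' <= INR n * (th' - th).
Proof.
  intros. unfold excess. rewrite <- rsum_minus, <- rsum_const. apply rsum_le.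
  intros. unfold Rmax. destruct_Rle; lra.
Qed.

(* The second difference of [th |-> max 0 (z - th)] is a tent of height [dl] centred at [th + dl]. *)
Lemma excess_second_difference_ge n z th dl i : 0 < dl -> (i < n)%nat ->
  th + dl / 2 <= z i <= th + 3 * dl / 2 ->
  dl / 2 <= excess n z th - 2 * excess n z (th + dl) + excess n z (th + 2 * dl).
Proof.
  intros Hdl Hi Hz. unfold excess. rewrite <- rsum_scal, <- rsum_minus, <- rsum_plus.
  eapply Rle_trans; [| apply (rsum_ge_term _ n i); [intros j _ | exact Hi]];
  unfold Rmax; destruct_Rle; lra.
Qed.

Lemma reach_lt N E i j : reach N E i j -> (i < N)%nat /\ (j < N)%nat.
Proof. induction 1; tauto. Qed.

Lemma reach_crosses N E (U : nat -> bool) i j : reach N E i j -> U i = true -> U j = false ->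
  exists a b, (a < N)%nat /\ (b < N)%nat /\ U a = true /\ U b = false /\ E a b.
Proof.
  induction 1 as [i Hi | i j k Hij IH Hk Ejk]; intros Ui Uk; [congruence |].
  destruct (U j) eqn:Uj.
  - exists j, k. apply reach_lt in Hij. tauto.
  - auto.
Qed.

(** * The saturated agents *)

Section SaturatedAgents.

Variables (N : nat) (s : nat -> R) (alpha : nat -> nat -> R -> R) (amax t0 : R) (x : nat -> R -> R).

Hypothesis s_pos : forall i, (i < N)%nat -> 0 < s i.
Hypothesis alpha_sym : forall i j t, (i < N)%nat -> (j < N)%nat -> 0 <= t -> alpha i j t = alpha j i t.
Hypothesis alpha_bounds :
  forall i j t, (i < N)%nat -> (j < N)%nat -> 0 <= t -> 0 <= alpha i j t <= amax.
Hypothesis amax_nonneg : 0 <= amax.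
Hypothesis t0_nonneg : 0 <= t0.
Hypothesis x_sol : is_solution N s alpha t0 x.

Local Notation y i t := (sat (s i) (x i t)).
Local Notation flux g t := (rsum (fun i => g i * rhs N s alpha x i t) N).

Lemma x_increment i u t : (i < N)%nat -> t0 <= u <= t ->
  ex_RInt (rhs N s alpha x i) u t /\ x i t - x i u = RInt (rhs N s alpha x i) u t.
Proof.
  intros Hi Hu.
  destruct (x_sol i Hi t ltac:(lra)) as [pr Ht]. destruct (x_sol i Hi u ltac:(lra)) as [pru Hu'].
  rewrite <- RInt_Reals in Ht, Hu'. apply ex_RInt_Reals_1 in pr, pru.
  assert (Hex : ex_RInt (rhs N s alpha x i) u t) by (apply (ex_RInt_subinterval _ t0 t); lra || assumption).
  split; [exact Hex |].
  rewrite <- (RInt_Chasles_R _ t0 u t) in Ht by assumption. lra.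
Qed.

Lemma rhs_bounded :
  exists K, 0 <= K /\ forall i t, (i < N)%nat -> 0 <= t -> Rabs (rhs N s alpha x i t) <= K.
Proof.
  set (S := rsum s N).
  assert (HS : forall i, (i < N)%nat -> s i <= S)
    by (intros; apply rsum_ge_term; auto; intros; apply Rlt_le; auto).
  exists (INR N * (amax * (2 * S))). split.
  - assert (0 <= S) by (apply rsum_nonneg; intros; apply Rlt_le; auto).
    apply Rmult_le_pos; [apply pos_INR | nra].
  - intros i t Hi Ht. unfold rhs. eapply Rle_trans; [apply rsum_abs |].
    rewrite <- rsum_const. apply rsum_le. intros j Hj.
    rewrite Rabs_mult. destruct (alpha_bounds i j t Hi Hj Ht).
    rewrite (Rabs_right (alpha i j t)) by lra.
    apply Rmult_le_compat; auto using Rabs_pos.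
    eapply Rle_trans; [apply Rabs_triang |]. rewrite Rabs_Ropp.
    pose proof (sat_bound (s j) (x j t) (s_pos j Hj)). pose proof (sat_bound (s i) (x i t) (s_pos i Hi)).
    pose proof (HS i Hi). pose proof (HS j Hj). lra.
Qed.

Lemma x_lipschitz K i u t : (forall i t, (i < N)%nat -> 0 <= t -> Rabs (rhs N s alpha x i t) <= K) ->
  (i < N)%nat -> t0 <= u <= t -> Rabs (x i t - x i u) <= K * (t - u).
Proof.
  intros HK Hi Hu. destruct (x_increment i u t Hi Hu) as [Hex ->].
  rewrite Rmult_comm. apply abs_RInt_le_const; [lra | assumption |].
  intros; apply HK; auto; lra.
Qed.

Lemma x_continuous i t : (i < N)%nat -> t0 < t -> continuity_pt (x i) t.
Proof.
  intros Hi Ht. destruct rhs_bounded as [K [HK0 HK]].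
  apply (continuity_pt_of_lipschitz _ t t0 K); auto.
  intros u v Huv. now apply x_lipschitz.
Qed.

Lemma flux_symmetrized g t : 0 <= t ->
  2 * flux g t = rsum (fun i => rsum (fun j => alpha i j t * ((g i - g j) * (y j t - y i t))) N) N.
Proof. intros Ht. apply rsum_antisymmetrize. intros; apply alpha_sym; auto. Qed.

Lemma weighted_increment g u t : t0 <= u <= t ->
  ex_RInt (fun τ => flux g τ) u t /\
  rsum (fun i => g i * (x i t - x i u)) N = RInt (fun τ => flux g τ) u t.
Proof.
  intros Hu.
  destruct (RInt_rsum (fun i τ => g i * rhs N s alpha x i τ) N u t) as [Hex Hint].
  { intros i Hi. apply ex_RInt_Rmult_l, (x_increment i u t Hi Hu). }
  split; [exact Hex |]. rewrite Hint. apply rsum_ext. intros i Hi.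
  destruct (x_increment i u t Hi Hu) as [Hexi ->]. now rewrite RInt_Rmult_l.
Qed.

Lemma sum_conserved t : t0 <= t -> rsum (fun i => x i t) N = rsum (fun i => x i t0) N.
Proof.
  intros Ht. destruct (weighted_increment (fun _ => 1) t0 t ltac:(lra)) as [_ Hint].
  assert (Hzero : RInt (fun τ => flux (fun _ => 1) τ) t0 t = 0).
  { rewrite <- (Rmult_0_r (t - t0)), <- RInt_Rconst. apply RInt_ext.
    intros τ Hτ. rewrite Rmin_left, Rmax_right in Hτ by lra.
    enough (2 * flux (fun _ => 1) τ = 0) by lra.
    rewrite flux_symmetrized by lra.
    rewrite <- (Rmult_0_r (INR N)), <- rsum_const. apply rsum_ext. intros i _.
    rewrite <- (Rmult_0_r (INR N)), <- rsum_const. apply rsum_ext. intros j _. ring. }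
  enough (rsum (fun i => x i t) N - rsum (fun i => x i t0) N = 0) by lra.
  rewrite <- rsum_minus, <- Hzero, <- Hint. apply rsum_ext. intros. ring.
Qed.

Local Notation excess_at th t := (excess N (fun i => x i t) th).

(* Agents above [th] at time [t + h] only exchange with agents below it at a rate of order [h]:
   at time [t + h] the saturated outputs are ordered across [th], and they move by at most [K h]. *)
Lemma flux_above_bound K th t h τ :
  (forall i t, (i < N)%nat -> 0 <= t -> Rabs (rhs N s alpha x i t) <= K) ->
  (forall i, (i < N)%nat -> - s i <= th <= s i) -> t0 <= t -> t <= τ <= t + h ->
  flux (fun i => if Rle_dec th (x i (t + h)) then 1 else 0) τ <= INR N * INR N * amax * K * h.
Proof.
  intros HK Hth Ht Hτ.
  assert (Hmove : forall k, (k < N)%nat -> Rabs (y k τ - y k (t + h)) <= K * h).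
  { intros k Hk. eapply Rle_trans; [apply sat_lipschitz; auto |].
    rewrite Rabs_minus_sym. eapply Rle_trans; [apply (x_lipschitz K); auto; lra |].
    apply Rmult_le_compat_l; [| lra]. eapply Rle_trans; [apply Rabs_pos | apply (HK k t); [exact Hk | lra]]. }
  enough (2 * flux (fun i => if Rle_dec th (x i (t + h)) then 1 else 0) τ
            <= INR N * (INR N * (amax * (2 * (K * h))))) by lra.
  rewrite flux_symmetrized by lra.
  rewrite <- rsum_const. apply rsum_le. intros i Hi.
  rewrite <- rsum_const. apply rsum_le. intros j Hj.
  pose proof (alpha_bounds i j τ Hi Hj ltac:(lra)).
  pose proof (proj1 (Rabs_le_between _ _) (Hmove i Hi)).
  pose proof (proj1 (Rabs_le_between _ _) (Hmove j Hj)).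
  pose proof (Hth i Hi). pose proof (Hth j Hj).
  destruct (Rle_dec th (x i (t + h))); destruct (Rle_dec th (x j (t + h))).
  - nra.
  - assert (y j (t + h) <= th) by (apply sat_le; auto; lra).
    assert (th <= y i (t + h)) by (apply sat_ge; auto; lra). nra.
  - assert (y i (t + h) <= th) by (apply sat_le; auto; lra).
    assert (th <= y j (t + h)) by (apply sat_ge; auto; lra). nra.
  - nra.
Qed.

Lemma excess_quadratic_step K th t h :
  (forall i t, (i < N)%nat -> 0 <= t -> Rabs (rhs N s alpha x i t) <= K) ->
  (forall i, (i < N)%nat -> - s i <= th <= s i) -> t0 <= t -> 0 <= h ->
  excess_at th (t + h) <= excess_at th t + (INR N * INR N * amax * K) * h * h.
Proof.
  intros HK Hth Ht Hh.
  set (g := fun i => if Rle_dec th (x i (t + h)) then 1 else 0).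
  assert (Hconvex : excess_at th (t + h) <= excess_at th t + rsum (fun i => g i * (x i (t + h) - x i t)) N).
  { unfold excess. rewrite <- rsum_plus. apply rsum_le. intros i Hi. unfold g, Rmax.
    destruct (Rle_dec th (x i (t + h))); destruct_Rle; lra. }
  destruct (weighted_increment g t (t + h) ltac:(lra)) as [Hex Hint]. rewrite Hint in Hconvex.
  enough (RInt (fun τ => flux g τ) t (t + h) <= (t + h - t) * (INR N * INR N * amax * K * h)) by lra.
  apply RInt_le_const; [lra | exact Hex |].
  intros τ Hτ. now apply flux_above_bound.
Qed.

Lemma excess_nonincreasing th t1 t2 : (forall i, (i < N)%nat -> - s i <= th <= s i) ->
  t0 <= t1 <= t2 -> excess_at th t2 <= excess_at th t1.
Proof.
  intros Hth Ht. destruct rhs_bounded as [K [HK0 HK]].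
  apply (nonincreasing_of_quadratic_step (fun t => excess_at th t) t0 (INR N * INR N * amax * K));
    [| intros; now apply excess_quadratic_step | exact Ht].
  pose proof (pos_INR N). repeat apply Rmult_le_pos; lra.
Qed.

Lemma excess_converges th : (forall i, (i < N)%nat -> - s i <= th <= s i) ->
  exists h, tends_at_infty (fun t => excess_at th t) h.
Proof.
  intros Hth. apply (tends_of_nonincreasing _ t0 0).
  - intros; now apply excess_nonincreasing.
  - intros; apply excess_nonneg.
Qed.

(* The limits [h k] of the excess at the thresholds [a + k dl] have first differences in
   [[0, N dl]]; over [2N + 1] consecutive second differences one of them is below [dl / 2],
   while an agent near the middle threshold forces the second difference up to [dl / 2]. *)
Lemma eventually_empty_band a d : a < d -> (forall i, (i < N)%nat -> - s i <= a /\ d <= s i) ->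
  exists a' d', a <= a' < d' /\ d' <= d /\
    near_infty (fun t => forall i, (i < N)%nat -> ~ (a' <= x i t <= d')).
Proof.
  intros Had Hlev.
  set (M := (2 * N + 2)%nat).
  assert (HM : 0 < INR M) by (apply lt_0_INR; unfold M; lia).
  set (dl := (d - a) / INR M).
  assert (Hdl : 0 < dl) by (apply Rdiv_lt_0_compat; lra).
  set (th := fun k : nat => a + INR k * dl).
  assert (thS : forall k, th (S k) = th k + dl) by (intros; unfold th; rewrite S_INR; ring).
  assert (thM : th M = d) by (unfold th, dl; field; lra).
  assert (Hrange : forall k, (k <= M)%nat -> a <= th k <= d).
  { intros k Hk. apply le_INR in Hk. pose proof (pos_INR k). rewrite <- thM. unfold th. nra. }
  assert (Hth : forall k, (k <= M)%nat -> forall i, (i < N)%nat -> - s i <= th k <= s i).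
  { intros k Hk i Hi. destruct (Hlev i Hi). destruct (Hrange k Hk). lra. }
  destruct (choice (fun k h => (k <= M)%nat -> tends_at_infty (fun t => excess_at (th k) t) h))
    as [h Hh].
  { intros k. destruct (Compare_dec.le_lt_dec k M) as [Hk | Hk].
    - destruct (excess_converges (th k) (Hth k Hk)) as [hk Hhk]. now exists hk.
    - exists 0. intros; lia. }
  destruct (second_difference_small h N dl Hdl) as [k [Hk Hsmall]].
  - enough (h 0%nat <= h 1%nat + INR N * dl) by lra.
    apply (tends_at_infty_le _ _ _ _ _ (Hh 0%nat ltac:(lia)) (Hh 1%nat ltac:(unfold M; lia))).
    exists 0. intros t _. pose proof (excess_lipschitz N (fun i => x i t) (th 0%nat) (th 1%nat)).
    rewrite thS in *. lra.
  - replace (2 * N + 2)%nat with (S (2 * N + 1)) by lia.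
    replace (h (2 * N + 1)%nat) with (h (2 * N + 1)%nat + 0) by ring.
    apply (tends_at_infty_le _ _ _ _ _ (Hh (S (2 * N + 1)) ltac:(unfold M; lia))
             (Hh (2 * N + 1)%nat ltac:(unfold M; lia))).
    exists 0. intros t _. rewrite Rplus_0_r, thS. apply excess_antitone. lra.
  - exists (th (S k) - dl / 2), (th (S k) + dl / 2).
    pose proof (Hrange k ltac:(lia)). pose proof (Hrange (S (S k)) ltac:(unfold M; lia)).
    rewrite !thS in *. repeat split; try lra.
    destruct (tends_at_infty_near _ _ (dl / 2 - (h k - 2 * h (S k) + h (S (S k)))) 
                (tends_at_infty_second_difference _ _ _ _ _ _ (Hh k ltac:(lia))
                   (Hh (S k) ltac:(lia)) (Hh (S (S k)) ltac:(unfold M; lia))) ltac:(lra)) as [T HT].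
    exists T. intros t Ht i Hi Hin.
    pose proof (excess_second_difference_ge N (fun i => x i t) (th k) dl i Hdl Hi ltac:(lra)).
    specialize (HT t Ht). rewrite !thS in HT.
    replace (th k + 2 * dl) with (th k + dl + dl) in * by ring. lra.
Qed.

Lemma side_flux_le (U : nat -> bool) p q d t : 0 <= t -> (p < N)%nat -> (q < N)%nat ->
  U p = true -> U q = false -> y q t + d <= y p t ->
  (forall i j, (i < N)%nat -> (j < N)%nat -> U i = true -> U j = false -> y j t <= y i t) ->
  flux (indicator U) t <= - (d / 2) * alpha p q t.
Proof.
  intros Ht Hp Hq Up Uq Hgap Hord.
  set (F := fun i j => alpha i j t * ((indicator U i - indicator U j) * (y j t - y i t))).
  assert (Fneg : forall i j, (i < N)%nat -> (j < N)%nat -> F i j <= 0).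
  { intros i j Hi Hj. unfold F, indicator. pose proof (alpha_bounds i j t Hi Hj Ht).
    destruct (U i) eqn:Ui; destruct (U j) eqn:Uj.
    - lra.
    - pose proof (Hord i j Hi Hj Ui Uj). nra.
    - pose proof (Hord j i Hj Hi Uj Ui). nra.
    - lra. }
  assert (Hpq : F p q <= - d * alpha p q t).
  { unfold F, indicator. rewrite Up, Uq. pose proof (alpha_bounds p q t Hp Hq Ht). nra. }
  assert (Hsum : rsum (fun i => rsum (fun j => F i j) N) N <= F p q).
  { eapply Rle_trans; [apply (rsum_le_term (fun i => rsum (fun j => F i j) N) N p) | ]; auto.
    - intros i Hi. rewrite <- (Rmult_0_r (INR N)), <- rsum_const. apply rsum_le. auto.
    - apply rsum_le_term; auto. }
  assert (2 * flux (indicator U) t = rsum (fun i => rsum (fun j => F i j) N) N)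
    by exact (flux_symmetrized (indicator U) t Ht).
  lra.
Qed.

Lemma side_sum_unbounded_below (U : nat -> bool) p q T d : t0 <= T -> (p < N)%nat -> (q < N)%nat ->
  U p = true -> U q = false -> integral_diverges (alpha p q) -> 0 < d ->
  (forall t, T <= t -> y q t + d <= y p t) ->
  (forall t i j, T <= t -> (i < N)%nat -> (j < N)%nat -> U i = true -> U j = false -> y j t <= y i t) ->
  forall M, exists t, T <= t /\ rsum (fun i => indicator U i * x i t) N < M.
Proof.
  intros HT Hp Hq Up Uq Hdiv Hd Hgap Hord M.
  set (G := rsum (fun i => indicator U i * x i T) N).
  destruct (integral_diverges_tail (alpha p q) amax T ltac:(lra)
              ltac:(intros; apply (alpha_bounds p q); auto) Hdiv (2 * (G - M) / d))
    as [T' [HTT' [Hex Hbig]]].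
  exists T'. split; [lra |].
  destruct (weighted_increment (indicator U) T T' ltac:(lra)) as [Hexf Hint].
  assert (Hdrain : RInt (fun τ => flux (indicator U) τ) T T'
                   <= RInt (fun τ => - (d / 2) * alpha p q τ) T T').
  { apply RInt_le; [lra | exact Hexf | apply ex_RInt_Rmult_l, Hex |].
    intros τ Hτ. apply (side_flux_le U p q d); auto; [lra | apply Hgap; lra |].
    intros i j Hi Hj Ui Uj. apply Hord; auto; lra. }
  rewrite RInt_Rmult_l in Hdrain by exact Hex.
  assert (Hsplit : rsum (fun i => indicator U i * x i T') N
                   = G + rsum (fun i => indicator U i * (x i T' - x i T)) N).
  { unfold G. rewrite <- rsum_plus. apply rsum_ext. intros; ring. }
  rewrite Hsplit, Hint.
  apply Rmult_lt_compat_l with (r := d / 2) in Hbig; [| lra].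
  replace (d / 2 * (2 * (G - M) / d)) with (G - M) in Hbig by (field; lra).
  lra.
Qed.

Lemma x_stays_outside_band i T a d : t0 < T -> (i < N)%nat -> a <= d ->
  (forall t, T <= t -> ~ (a <= x i t <= d)) ->
  (d < x i T -> forall t, T <= t -> d < x i t) /\ (x i T < a -> forall t, T <= t -> x i t < a).
Proof.
  intros HT Hi Had Hout.
  assert (Hcont : forall t z, T <= z <= t -> continuity_pt (x i) z)
    by (intros; apply x_continuous; auto; lra).
  assert (Hout' : forall t z, T <= z <= t -> ~ (a <= x i z <= d)) by (intros; apply Hout; lra).
  split; intros HxT t Ht.
  - apply (no_crossing_above (x i) T t a d); [lra | lra | apply Hcont | apply Hout' | exact HxT].
  - apply (no_crossing_below (x i) T t a d); [lra | lra | apply Hcont | apply Hout' | exact HxT].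
Qed.

Lemma eventually_one_side_of_band T a d : t0 < T -> a < d -> integrally_connected N alpha ->
  (forall i, (i < N)%nat -> - s i <= a /\ d <= s i) ->
  (forall t i, T <= t -> (i < N)%nat -> ~ (a <= x i t <= d)) ->
  (forall i t, (i < N)%nat -> T <= t -> d < x i t) \/ (forall i t, (i < N)%nat -> T <= t -> x i t < a).
Proof.
  intros HT Had Hcon Hlev Hout.
  set (U := fun i => if Rlt_dec d (x i T) then true else false).
  assert (Hside : forall i, (i < N)%nat ->
            (U i = true -> forall t, T <= t -> d < x i t) /\ (U i = false -> forall t, T <= t -> x i t < a)).
  { intros i Hi. destruct (x_stays_outside_band i T a d HT Hi ltac:(lra)) as [Habove Hbelow].
    { intros t Ht. now apply Hout. }
    pose proof (Hout T i (Rle_refl T) Hi).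
    unfold U. destruct (Rlt_dec d (x i T)); split; intros HU; try discriminate; auto.
    apply Hbelow. lra. }
  destruct (classic (exists p q, (p < N)%nat /\ (q < N)%nat /\ U p = true /\ U q = false))
    as [[p [q [Hp [Hq [Up Uq]]]]] | Hnomix].
  - exfalso.
    destruct (reach_crosses N _ U p q (Hcon p q Hp Hq) Up Uq) as [i [j [Hi [Hj [Ui [Uj Eij]]]]]].
    assert (Hhi : forall k t, (k < N)%nat -> U k = true -> T <= t -> d <= y k t).
    { intros k t Hk Uk Ht. destruct (Hlev k Hk). apply sat_ge; auto; [lra |].
      apply Rlt_le, (proj1 (Hside k Hk)); auto. }
    assert (Hlo : forall k t, (k < N)%nat -> U k = false -> T <= t -> y k t <= a).
    { intros k t Hk Uk Ht. destruct (Hlev k Hk). apply sat_le; auto; [lra |].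
      apply Rlt_le, (proj2 (Hside k Hk)); auto. }
    destruct (side_sum_unbounded_below U i j T (d - a) ltac:(lra) Hi Hj Ui Uj Eij ltac:(lra))
      with (M := - INR N * Rabs d) as [t [Ht Hsum]].
    + intros t Ht. pose proof (Hhi i t Hi Ui Ht). pose proof (Hlo j t Hj Uj Ht). lra.
    + intros t k l Ht Hk Hl Uk Ul. pose proof (Hhi k t Hk Uk Ht). pose proof (Hlo l t Hl Ul Ht). lra.
    + enough (- INR N * Rabs d <= rsum (fun i => indicator U i * x i t) N) by lra.
      replace (- INR N * Rabs d) with (rsum (fun _ => - Rabs d) N) by (rewrite rsum_const; ring).
      apply rsum_le. intros k Hk. unfold indicator. pose proof (Rabs_pos d).
      destruct (U k) eqn:Uk; [| lra].
      pose proof (proj1 (Hside k Hk) Uk t Ht). pose proof (Rle_abs (- d)). rewrite Rabs_Ropp in *. lra.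
  - destruct (classic (exists p, (p < N)%nat /\ U p = true)) as [[p [Hp Up]] | Hnone].
    + left. intros i t Hi Ht. destruct (U i) eqn:Ui; [now apply (proj1 (Hside i Hi)) |].
      exfalso. apply Hnomix. now exists p, i.
    + right. intros i t Hi Ht. destruct (U i) eqn:Ui; [exfalso; apply Hnone; now exists i |].
      now apply (proj2 (Hside i Hi)).
Qed.

Lemma eventually_above_nonneg_average c e : integrally_connected N alpha -> (0 < N)%nat ->
  c = / INR N * rsum (fun k => x k t0) N -> 0 <= c -> (forall i, (i < N)%nat -> c <= s i) -> 0 < e ->
  near_infty (fun t => forall i, (i < N)%nat -> c - e < x i t).
Proof.
  intros Hcon HN Hc Hc0 Hcs He.
  assert (HNpos : 0 < INR N) by (apply lt_0_INR; lia).
  destruct (exists_argmin s N HN) as [p [Hp Hmin]].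
  set (e' := Rmin e (s p)).
  assert (He' : 0 < e' <= e) by (split; [apply Rmin_pos; auto | apply Rmin_l]).
  assert (He's : forall i, (i < N)%nat -> e' <= s i)
    by (intros i Hi; specialize (Hmin i Hi); pose proof (Rmin_r e (s p)); unfold e'; lra).
  destruct (eventually_empty_band (c - e') c ltac:(lra)) as [a [d [Ha [Hd [T HT]]]]].
  { intros i Hi. specialize (He's i Hi). specialize (Hcs i Hi). lra. }
  pose proof (Rmax_l T t0). pose proof (Rmax_r T t0).
  destruct (eventually_one_side_of_band (Rmax T t0 + 1) a d) as [Habove | Hbelow];
    [lra | lra | exact Hcon | | | |].
  - intros i Hi. specialize (He's i Hi). specialize (Hcs i Hi). lra.
  - intros t i Ht Hi. apply HT; [lra | exact Hi].
  - exists (Rmax T t0 + 1). intros t Ht i Hi. specialize (Habove i t Hi Ht). lra.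
  - exfalso. set (t := Rmax T t0 + 1).
    assert (Hlt : rsum (fun i => x i t) N < rsum (fun _ => a) N)
      by (apply rsum_lt; [exact HN | intros i Hi; apply Hbelow; [exact Hi | unfold t; lra]]).
    rewrite sum_conserved, rsum_const in Hlt by (unfold t; lra).
    subst c. apply (Rmult_lt_compat_l (/ INR N)) in Hlt; [| now apply Rinv_0_lt_compat].
    rewrite <- Rmult_assoc, Rinv_l, Rmult_1_l in Hlt by lra. lra.
Qed.

Lemma consensus_of_nonneg_average : integrally_connected N alpha -> (0 < N)%nat ->
  0 <= / INR N * rsum (fun k => x k t0) N ->
  (forall i, (i < N)%nat -> / INR N * rsum (fun k => x k t0) N <= s i) -> consensus N x.
Proof.
  intros Hcon HN Hc0 Hcs. set (c := / INR N * rsum (fun k => x k t0) N) in *.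
  assert (HNpos : 0 < INR N) by (apply lt_0_INR; lia).
  exists c. intros i Hi eps Heps.
  set (e := eps / (INR N + 1)).
  assert (He : 0 < e) by (apply Rdiv_lt_0_compat; lra).
  destruct (near_infty_ge _ t0 (eventually_above_nonneg_average c e Hcon HN eq_refl Hc0 Hcs He))
    as [T HT].
  exists T. intros t Ht. destruct (HT t Ht) as [Ht0 Habove].
  assert (Hzero : rsum (fun j => x j t - c) N = 0).
  { rewrite rsum_minus, rsum_const, sum_conserved by exact Ht0. unfold c. field. lra. }
  pose proof (rsum_zero_upper (fun j => x j t - c) N e i He Hzero
                ltac:(intros j Hj; specialize (Habove j Hj); lra) Hi).
  specialize (Habove i Hi). apply Rabs_lt_between.
  replace eps with (INR N * e + e) by (unfold e; field; lra). nra.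
Qed.

Lemma consensus_limit_is_average C : (0 < N)%nat ->
  (forall i, (i < N)%nat -> tends_at_infty (x i) C) -> rsum (fun k => x k t0) N = INR N * C.
Proof.
  intros HN HC.
  assert (HNpos : 0 < INR N) by (apply lt_0_INR; lia).
  enough (Rabs (rsum (fun k => x k t0) N - INR N * C) <= 0)
    by (pose proof (Rabs_pos (rsum (fun k => x k t0) N - INR N * C));
        apply Rminus_diag_uniq, Rabs_eq_0; lra).
  apply le_epsilon. intros eps Heps. rewrite Rplus_0_l.
  set (e := eps / INR N).
  destruct (near_infty_ge _ t0 (near_infty_forall_lt (fun i t => Rabs (x i t - C) < e) N
                                  (fun i Hi => HC i Hi e ltac:(apply Rdiv_lt_0_compat; lra)))) as [T HT].
  destruct (HT T (Rle_refl T)) as [HT0 Hnear].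
  replace eps with (INR N * e) by (unfold e; field; lra).
  rewrite <- (sum_conserved T HT0), <- rsum_const, <- rsum_minus.
  rewrite <- (rsum_const e). eapply Rle_trans; [apply rsum_abs |].
  apply rsum_le. intros. now apply Rlt_le, Hnear.
Qed.

Lemma output_tends i C : (i < N)%nat -> tends_at_infty (x i) C ->
  tends_at_infty (fun t => y i t) (sat (s i) C).
Proof.
  intros Hi HC eps Heps. destruct (HC eps Heps) as [T HT]. exists T. intros t Ht.
  eapply Rle_lt_trans; [apply sat_lipschitz, s_pos, Hi | auto].
Qed.

(* If the common limit exceeded the lowest level [s p], every other output would settle strictly
   above [s p >= y p], and the edge leaving [p] would drain the sum of the other agents. *)
Lemma consensus_limit_le_min_level p r C : integrally_connected N alpha ->
  (p < N)%nat -> (r < N)%nat -> r <> p -> (forall k, (k < N)%nat -> k <> p -> s p < s k) ->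
  (forall i, (i < N)%nat -> tends_at_infty (x i) C) -> C <= s p.
Proof.
  intros Hcon Hp Hr Hrp Hmin HC. apply Rnot_lt_le. intros HCp.
  set (U := fun i => negb (Nat.eqb i p)).
  assert (HU : forall k, U k = false <-> k = p).
  { intros k. unfold U. rewrite Bool.negb_false_iff. apply Nat.eqb_eq. }
  assert (Ur : U r = true) by (apply Bool.not_false_is_true; rewrite HU; exact Hrp).
  assert (Up : U p = false) by (now apply HU).
  destruct (reach_crosses N _ U r p (Hcon r p Hr Hp) Ur Up) as [a [b [Ha [Hb [Ua [Ub Eab]]]]]].
  apply HU in Ub. subst b.
  assert (Hap : a <> p) by (intros ->; congruence).
  assert (Hlim : forall k, (k < N)%nat -> k <> p -> s p < sat (s k) C).
  { intros k Hk Hkp. specialize (Hmin k Hk Hkp). pose proof (s_pos p Hp).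
    apply Rlt_le_trans with (Rmin C (s k)); [apply Rmin_glb_lt; lra |].
    apply sat_ge; [lra | | apply Rmin_l]. split; [apply Rmin_glb; lra | apply Rmin_r]. }
  set (d := (sat (s a) C - s p) / 2).
  assert (Hd : 0 < d) by (unfold d; specialize (Hlim a Ha Hap); lra).
  assert (Hothers : near_infty (fun t => forall k, (k < N)%nat -> k <> p -> s p < y k t)).
  { apply (near_infty_forall_lt (fun k t => k <> p -> s p < y k t)). intros k Hk.
    destruct (Nat.eq_dec k p) as [-> | Hkp]; [exists 0; intros; congruence |].
    specialize (Hlim k Hk Hkp).
    destruct (tends_at_infty_near _ _ (sat (s k) C - s p) (output_tends k C Hk (HC k Hk)) ltac:(lra))
      as [T HT].
    exists T. intros t Ht _. specialize (HT t Ht). lra. }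
  destruct (near_infty_ge _ t0 (near_infty_and _ _ Hothers (near_infty_and _ _
              (tends_at_infty_near _ _ d (output_tends a C Ha (HC a Ha)) Hd)
              (tends_at_infty_near _ _ 1 (HC p Hp) ltac:(lra))))) as [T HT].
  destruct (HT T (Rle_refl T)) as [HT0 _].
  assert (Hyp_le : forall t, y p t <= s p)
    by (intros; eapply Rle_trans; [apply Rle_abs | apply sat_bound, s_pos, Hp]).
  destruct (side_sum_unbounded_below U a p T d HT0 Ha Hp Ua Up Eab Hd)
    with (M := rsum (fun k => x k t0) N - C - 1) as [t [Ht Hsum]].
  - intros t Ht. destruct (HT t Ht) as [_ [_ [Hya _]]]. specialize (Hyp_le t). unfold d in *. lra.
  - intros t i j Ht Hi Hj Ui Uj. apply HU in Uj. subst j. destruct (HT t Ht) as [_ [Hgt _]].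
    assert (Hip : i <> p) by (intros ->; congruence).
    specialize (Hyp_le t). specialize (Hgt i Hi Hip). lra.
  - destruct (HT t Ht) as [Ht0 [_ [_ Hxp]]].
    unfold U in Hsum. rewrite rsum_indicator_neq, sum_conserved in Hsum by assumption. lra.
Qed.

End SaturatedAgents.

Lemma rhs_opp N s alpha x i t : (forall i, (i < N)%nat -> 0 < s i) -> (i < N)%nat ->
  rhs N s alpha (fun i t => - x i t) i t = - rhs N s alpha x i t.
Proof.
  intros Hs Hi. unfold rhs.
  replace (- rsum _ N)
    with (-1 * rsum (fun j => alpha i j t * (sat (s j) (x j t) - sat (s i) (x i t))) N) by ring.
  rewrite <- rsum_scal. apply rsum_ext. intros j Hj. rewrite !sat_opp by auto. ring.
Qed.

Lemma is_solution_opp N s alpha t0 x : (forall i, (i < N)%nat -> 0 < s i) ->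
  is_solution N s alpha t0 x -> is_solution N s alpha t0 (fun i t => - x i t).
Proof.
  intros Hs Hsol i Hi t Ht. destruct (Hsol i Hi t Ht) as [pr Hx].
  rewrite <- RInt_Reals in Hx. apply ex_RInt_Reals_1 in pr.
  assert (Hex : ex_RInt (rhs N s alpha (fun i t => - x i t) i) t0 t).
  { apply (ex_RInt_ext (fun τ => opp (rhs N s alpha x i τ)));
      [| exact (@ex_RInt_opp R_NormedModule _ _ _ pr)].
    intros τ _. symmetry. now apply rhs_opp. }
  exists (ex_RInt_Reals_0 _ _ _ Hex). rewrite <- RInt_Reals.
  rewrite (RInt_ext _ (fun τ => opp (rhs N s alpha x i τ))) by (intros; now apply rhs_opp).
  rewrite (@RInt_opp R_CompleteNormedModule) by exact pr. rewrite Hx.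
  change (opp (RInt (rhs N s alpha x i) t0 t)) with (- RInt (rhs N s alpha x i) t0 t). ring.
Qed.

Lemma consensus_of_opp N x : consensus N (fun i t => - x i t) -> consensus N x.
Proof.
  intros [C HC]. exists (- C). intros i Hi eps Heps. destruct (HC i Hi eps Heps) as [T HT].
  exists T. intros t Ht. replace (x i t - - C) with (- (- x i t - C)) by ring.
  rewrite Rabs_Ropp. auto.
Qed.

Lemma average_abs n S : (0 < n)%nat -> / INR n * Rabs S = Rabs (/ INR n * S).
Proof.
  intros Hn. assert (0 < / INR n) by (apply Rinv_0_lt_compat, lt_0_INR; lia).
  rewrite Rabs_mult, (Rabs_right (/ INR n)); lra.
Qed.

Lemma consensus_of_small_average N s alpha amax t0 x :
  (forall i, (i < N)%nat -> 0 < s i) ->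
  (forall i j t, (i < N)%nat -> (j < N)%nat -> 0 <= t -> alpha i j t = alpha j i t) ->
  (forall i j t, (i < N)%nat -> (j < N)%nat -> 0 <= t -> 0 <= alpha i j t <= amax) ->
  0 <= amax -> 0 <= t0 -> is_solution N s alpha t0 x -> integrally_connected N alpha -> (0 < N)%nat ->
  (forall i, (i < N)%nat -> / INR N * Rabs (rsum (fun k => x k t0) N) <= s i) ->
  consensus N x.
Proof.
  intros Hs Hsym Hbnd Hamax Ht0 Hsol Hcon HN Hsmall.
  setoid_rewrite (average_abs N _ HN) in Hsmall.
  destruct (Rle_dec 0 (/ INR N * rsum (fun k => x k t0) N)) as [Hc | Hc].
  - apply (consensus_of_nonneg_average N s alpha amax t0 x); auto.
    intros i Hi. specialize (Hsmall i Hi).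
    pose proof (Rle_abs (/ INR N * rsum (fun k => x k t0) N)). lra.
  - apply consensus_of_opp, (consensus_of_nonneg_average N s alpha amax t0); auto using is_solution_opp;
      rewrite rsum_opp.
    + lra.
    + intros i Hi. specialize (Hsmall i Hi). rewrite Rabs_left in Hsmall by lra. lra.
Qed.

Lemma average_bounded_of_consensus N s alpha amax t0 x :
  (forall i, (i < N)%nat -> 0 < s i) ->
  (forall i j, (i < N)%nat -> (j < N)%nat -> i <> j -> s i <> s j) ->
  (forall i j t, (i < N)%nat -> (j < N)%nat -> 0 <= t -> alpha i j t = alpha j i t) ->
  (forall i j t, (i < N)%nat -> (j < N)%nat -> 0 <= t -> 0 <= alpha i j t <= amax) ->
  0 <= t0 -> is_solution N s alpha t0 x -> integrally_connected N alpha ->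
  (exists i j, (i < N)%nat /\ (j < N)%nat /\ x i t0 <> x j t0) ->
  consensus N x -> forall i, (i < N)%nat -> / INR N * Rabs (rsum (fun k => x k t0) N) <= s i.
Proof.
  intros Hs Hdist Hsym Hbnd Ht0 Hsol Hcon [i1 [j1 [Hi1 [Hj1 Hx]]]] [C HC] i Hi.
  assert (HN : (0 < N)%nat) by lia.
  destruct (exists_argmin s N HN) as [p [Hp Hmin]].
  assert (Hstrict : forall k, (k < N)%nat -> k <> p -> s p < s k).
  { intros k Hk Hkp. specialize (Hmin k Hk). specialize (Hdist k p Hk Hp Hkp). lra. }
  assert (Hr : exists r, (r < N)%nat /\ r <> p).
  { destruct (Nat.eq_dec i1 p) as [-> | Hi1p]; [exists j1 | exists i1]; split; auto.
    intros ->. auto. }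
  destruct Hr as [r [Hr Hrp]].
  assert (Hup : C <= s p) by (eapply (consensus_limit_le_min_level N s alpha amax t0 x); eauto).
  assert (Hlow : - C <= s p).
  { apply (consensus_limit_le_min_level N s alpha amax t0 (fun i t => - x i t) Hs Hsym Hbnd Ht0
             (is_solution_opp N s alpha t0 x Hs Hsol) p r); auto.
    intros k Hk. exact (tends_at_infty_opp (x k) C (HC k Hk)). }
  rewrite (consensus_limit_is_average N s alpha t0 x Hsym Ht0 Hsol C HN HC).
  rewrite average_abs, <- Rmult_assoc, Rinv_l, Rmult_1_l by (auto; apply not_0_INR; lia).
  specialize (Hmin i Hi). apply Rabs_le. lra.
Qed.

Theorem theorem3 (N : nat) (s : nat -> R) (alpha : nat -> nat -> R -> R)
  (amin amax t0 : R) (x : nat -> R -> R) :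
  (forall i, (i < N)%nat -> 0 < s i) ->
  (forall i j, (i < N)%nat -> (j < N)%nat -> i <> j -> s i <> s j) ->
  (forall i j t, (i < N)%nat -> (j < N)%nat -> 0 <= t -> alpha i j t = alpha j i t) ->
  (forall i j t, (i < N)%nat -> (j < N)%nat -> 0 <= t -> 0 <= alpha i j t) ->
  (forall i j, (i < N)%nat -> (j < N)%nat -> cont_ae_nonneg (alpha i j)) ->
  integrally_connected N alpha ->
  0 < amin -> amin <= amax ->
  (forall i j t, (i < N)%nat -> (j < N)%nat -> 0 <= t ->
     alpha i j t = 0 \/ (amin <= alpha i j t <= amax)) ->
  0 <= t0 ->
  is_solution N s alpha t0 x ->
  (exists i j, (i < N)%nat /\ (j < N)%nat /\ x i t0 <> x j t0) ->
  (consensus N x <->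
   forall i, (i < N)%nat -> / INR N * Rabs (rsum (fun k => x k t0) N) <= s i).
Proof.
  intros Hs Hdist Hsym Hnn _ Hcon Hamin Hamax Hrange Ht0 Hsol Hdiff.
  assert (Hbnd : forall i j t, (i < N)%nat -> (j < N)%nat -> 0 <= t -> 0 <= alpha i j t <= amax).
  { intros i j t Hi Hj Ht. split; [now apply Hnn |].
    destruct (Hrange i j t Hi Hj Ht) as [-> | [_ H]]; lra. }
  assert (HN : (0 < N)%nat) by (destruct Hdiff as [i [j [Hi _]]]; lia).
  split.
  - now apply (average_bounded_of_consensus N s alpha amax t0 x).
  - apply (consensus_of_small_average N s alpha amax t0 x); auto; lra.
Qed.
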